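(* Let $W$ be a recurrent infinite word and let $S$ be a graph with words satisfying properties (1)–(6) of a Rauzy scheme for $W$. Then for every factor $u$ of $W$ there is an admissible path $s$ in $S$ such that $u\sqsubseteq F(s)$.
   Context: An infinite word $W$ is recurrent if every factor of $W$ occurs in $W$ infinitely many times. For finite words, $u\sqsubseteq w$ means $u$ is a factor of $w$, and $u\sqsubseteq_k w$ means $u$ occurs in $w$ at least $k$ times. A graph with words is a strongly connected finite directed graph (multiple edges and loops allowed) in which every edge $e$ carries two finite words, a front word $F(e)$ and a back word $B(e)$, and every vertex either has in-degree $1$ and out-degree $>1$ (distributing vertex) or in-degree $>1$ and out-degree $1$ (collecting vertex). A path is a finite nonempty sequence of edges $v_1\dots v_n$ with each $v_{i+1}$ starting where $v_i$ ends; its edge record is the word $v_1\dots v_n$ over the alphabet of edges, and subpaths, prefixes, suffixes and $s_1\sqsubseteq_k s_2$ for paths are defined via edge records. A path is symmetric if its first edge starts at a collecting vertex and its last edge ends at a distributing vertex. For $s=v_1\dots v_n$, $F(s)$ is the concatenation, in order, of the front words of $v_1$ and of all $v_i$ ($i\ge2$) starting at a distributing vertex; $B(s)$ is the concatenation, in order, of the back words of all $v_i$ ($i\le n-1$) ending at a collecting vertex and of $v_n$. The properties of a Rauzy scheme for $W$ are: (1) the graph has more than one edge; (2) front words of edges leaving a common distributing vertex have pairwise distinct first letters, and back words of edges entering a common collecting vertex have pairwise distinct last letters; (3) $F(s)=B(s)$ for every symmetric path $s$; (4) for symmetric paths $s_1,s_2$ and $k\ge1$, $F(s_1)\sqsubseteq_k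 F(s_2)$ implies $s_1\sqsubseteq_k s_2$; (5) all words on edges are factors of $W$; (6) every factor of $W$ is a factor of $F(s)$ for some symmetric path $s$; (7) for every edge $e$ there is a factor $u_e$ of $W$ such that every symmetric path $s$ with $u_e\sqsubseteq F(s)$ passes through $e$. A graph with words satisfying all of (1)–(7) is a Rauzy scheme for $W$. A symmetric path $s$ is admissible if $F(s)\sqsubseteq W$. *)

From mathcomp Require Import ssreflect ssrfun ssrbool eqtype ssrnat seq path choice fintype fingraph.
Set Implicit Arguments. Unset Strict Implicit. Unset Printing Implicit Defensive.

Section Words.
Variable A : eqType.

Definition window (W : nat -> A) (i n : nat) : seq A := mkseq (fun j => W (i + j)) n.

Definition ifactor (W : nat -> A) (u : seq A) : Prop := exists i, window W i (size u) = u.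

Definition recurrent (W : nat -> A) : Prop :=
  forall u, ifactor W u -> forall N, exists i, N <= i /\ window W i (size u) = u.

Definition occ (T : eqType) (u w : seq T) : nat :=
  count (fun i => take (size u) (drop i w) == u) (iota 0 (size w - size u).+1).

Definition occk (T : eqType) (k : nat) (u w : seq T) : bool := k <= occ u w.
End Words.

Section Graph.
Variables (A : eqType) (V E : finType) (src tgt : E -> V) (Fw Bw : E -> seq A).

Definition indeg (v : V) : nat := #|[pred e | tgt e == v]|.
Definition outdeg (v : V) : nat := #|[pred e | src e == v]|.
Definition distributing (v : V) : bool := (indeg v == 1) && (1 < outdeg v).
Definition collecting (v : V) : bool := (1 < indeg v) && (outdeg v == 1).

Definition adj : rel V := fun x y => [exists e, (src e == x) && (tgt e == y)].
Definition strongly_connected : Prop := forall x y, connect adj x y.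

(* graph with words (the words are the maps Fw, Bw) *)
Definition graph_with_words : Prop :=
  strongly_connected /\ forall v, distributing v || collecting v.

Definition is_path (s : seq E) : bool :=
  (s != [::]) && sorted (fun e1 e2 => tgt e1 == src e2) s.

Definition symmetric (s : seq E) : bool :=
  if s is e :: s' then
    [&& is_path s, collecting (src e) & distributing (tgt (last e s'))]
  else false.

Definition Fp (s : seq E) : seq A :=
  if s is e :: s' then
    Fw e ++ flatten [seq Fw x | x <- s' & distributing (src x)]
  else [::].

Definition Bp (s : seq E) : seq A :=
  if s is e :: s' then
    flatten [seq Bw x | x <- belast e s' & collecting (tgt x)] ++ Bw (last e s')
  else [::].

Definition rs_prop1 : Prop := 1 < #|E|.
Definition rs_prop2 : Prop :=
  (forall e1 e2, e1 != e2 -> src e1 = src e2 -> distributing (src e1) ->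
     exists a1 w1 a2 w2, (Fw e1 = a1 :: w1 /\ Fw e2 = a2 :: w2 /\ a1 != a2)) /\
  (forall e1 e2, e1 != e2 -> tgt e1 = tgt e2 -> collecting (tgt e1) ->
     exists w1 a1 w2 a2, (Bw e1 = rcons w1 a1 /\ Bw e2 = rcons w2 a2 /\ a1 != a2)).
Definition rs_prop3 : Prop := forall s, symmetric s -> Fp s = Bp s.
Definition rs_prop4 : Prop :=
  forall s1 s2 k, symmetric s1 -> symmetric s2 -> 1 <= k ->
    occk k (Fp s1) (Fp s2) -> occk k s1 s2.
Definition rs_prop5 (W : nat -> A) : Prop :=
  forall e, ifactor W (Fw e) /\ ifactor W (Bw e).
Definition rs_prop6 (W : nat -> A) : Prop :=
  forall u, ifactor W u -> exists s, symmetric s /\ infix u (Fp s).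

Definition admissible (W : nat -> A) (s : seq E) : Prop :=
  symmetric s /\ ifactor W (Fp s).
End Graph.

From Pilot Require Import Defs.
From mathcomp Require Import ssreflect ssrfun ssrbool eqtype ssrnat seq path choice fintype fingraph bigop.
From mathcomp Require Import zify.
Set Implicit Arguments. Unset Strict Implicit. Unset Printing Implicit Defensive.

(* Let L bound the lengths of all edge words.  By recurrence, u occurs at a
   position i >= L, so v = W[i-L, i+|u|+L) is a factor of W containing u with
   a margin of L on both sides; by (6), v = F(s)[a, a+|v|) for a symmetric s.
   We then cut s into a symmetric subpath p whose front word F(p) starts in
   the left margin and ends in the right margin of v; F(p) is then a factor
   of v (so p is admissible) and contains u.
   - Cutting on the left: before an edge leaving a collecting vertex.  By (3),
     F(s) = B(s), and the B-word of the dropped prefix grows by at most L per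
     edge, and only when the next edge leaves a collecting vertex.
   - Cutting on the right: after an edge entering a distributing vertex; the
     F-word of the kept prefix grows by at most L per edge, and only after
     such an edge.
   Both cuts are instances of a discrete intermediate value argument
   ([first_crossing], [last_crossing]). *)

Section Crossing.
Variables (f : nat -> nat) (P : pred nat) (L m : nat).
Hypothesis f0_le : f 0 <= L.
Hypothesis step_le : forall k, k < m -> f k.+1 <= f k + L.

Lemma first_crossing n :
  P 0 -> (forall k, k < m -> ~~ P k.+1 -> f k.+1 = f k) -> n <= f m ->
  exists k, [/\ k <= m, P k, n <= f k & f k <= n + L].
Proof.
move=> P0 flat_in n_le.
have reach : exists k, (k <= m) && (n <= f k) by exists m; rewrite leqnn.
case: (ex_minnP reach) => -[|k] /andP[k_le n_le_k] k_min.
  by exists 0; split => //; lia.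
have f_k_lt : f k < n.
  by rewrite ltnNge; apply/negP => le_n; have := k_min k; rewrite le_n andbT; lia.
have Pk : P k.+1 by apply/negPn/negP => /(flat_in k k_le) eq_f; lia.
by exists k.+1; have := step_le k_le; split => //; lia.
Qed.

Lemma last_crossing n :
  P m -> (forall k, k < m -> ~~ P k -> f k.+1 = f k) -> n <= f m ->
  exists k, [/\ k <= m, P k, n <= f k & f k <= n + L].
Proof.
move=> Pm flat_out n_le.
have below : exists k, (k <= m) && (f k <= n + L) by exists 0; rewrite leq0n; lia.
have bounded k : (k <= m) && (f k <= n + L) -> k <= m by case/andP.
case: (ex_maxnP below bounded) => k /andP[k_le f_k_le] k_max.
case: (ltnP k m) => [k_lt | m_le]; last first.
  by exists k; split => //; have -> : k = m by lia.
have f_next : n + L < f k.+1.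
  by rewrite ltnNge; apply/negP => le_f; have := k_max k.+1; rewrite le_f k_lt; lia.
have Pk : P k by apply/negPn/negP => /(flat_out k k_lt) eq_f; lia.
by exists k; have := step_le k_lt; split => //; lia.
Qed.

End Crossing.

Section SymmetricPaths.
Variables (A : eqType) (V E : finType) (src tgt : E -> V) (Fw Bw : E -> seq A).

Local Notation F := (Fp src tgt Fw).
Local Notation B := (Bp src tgt Bw).
Local Notation sym := (Defs.symmetric src tgt).
Local Notation linked := (fun e1 e2 : E => tgt e1 == src e2).

Definition Fext (t : seq E) : seq A :=
  flatten [seq Fw x | x <- t & distributing src tgt (src x)].

Definition Bext (t : seq E) : seq A :=
  flatten [seq Bw x | x <- t & collecting src tgt (tgt x)].

Lemma Fp_cat p t : p != [::] -> F (p ++ t) = F p ++ Fext t.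
Proof.
by case: p => [|e p] // _ /=; rewrite /Fext filter_cat map_cat flatten_cat catA.
Qed.

Lemma Bp_cat t s : s != [::] -> B (t ++ s) = Bext t ++ B s.
Proof.
case: s => [|d s] // _; case: t => [|e t] //=.
rewrite belast_cat last_cat /= -cat_rcons -lastI.
by rewrite /Bext filter_cat map_cat flatten_cat catA.
Qed.

Lemma Fp_rcons p e : p != [::] ->
  F (rcons p e) = F p ++ (if distributing src tgt (src e) then Fw e else [::]).
Proof.
by move=> p_nil; rewrite -cats1 Fp_cat // /Fext /=; case: ifP => _ /=; rewrite ?cats0.
Qed.

Lemma Bext_rcons t e :
  Bext (rcons t e) = Bext t ++ (if collecting src tgt (tgt e) then Bw e else [::]).
Proof.
by rewrite /Bext -cats1 filter_cat map_cat flatten_cat /=; case: ifP => //= _; rewrite cats0.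
Qed.

Lemma linked_nth s x0 k :
  sorted linked s -> k.+1 < size s -> tgt (nth x0 s k) = src (nth x0 s k.+1).
Proof. by case: s => [|e s] //= /(pathP x0) linked_s k_lt; apply/eqP/linked_s. Qed.

Lemma symmetric_drop s x0 k :
  sym s -> k < size s -> collecting src tgt (src (nth x0 s k)) -> sym (drop k s).
Proof.
case: s => [|e t] // /and3P[/andP[_ sorted_s] _ dist_last] k_lt coll_k.
have sorted_drop := drop_sorted k sorted_s.
rewrite (drop_nth x0 k_lt) in sorted_drop *.
rewrite /= coll_k /is_path sorted_drop /=.
suff -> : last (nth x0 (e :: t) k) (drop k t) = last e t by [].
have split_s : e :: t = take k (e :: t) ++ nth x0 (e :: t) k :: drop k t.
  by rewrite -[drop k t]/(drop k.+1 (e :: t)) -drop_nth // cat_take_drop.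
have -> : last e t = last e (take k (e :: t) ++ nth x0 (e :: t) k :: drop k t).
  by rewrite -split_s.
by rewrite last_cat.
Qed.

Lemma symmetric_take s x0 k :
  sym s -> k < size s -> distributing src tgt (tgt (nth x0 s k)) -> sym (take k.+1 s).
Proof.
case: s => [|e t] // /and3P[/andP[_ sorted_s] coll_first _] k_lt dist_k /=.
rewrite coll_first /is_path /=.
have := take_sorted k.+1 sorted_s => /= ->.
by rewrite -[last e _]/(last x0 (take k.+1 (e :: t))) (take_nth x0 k_lt) last_rcons.
Qed.

Variable L : nat.
Hypothesis Fw_le : forall e, size (Fw e) <= L.
Hypothesis Bw_le : forall e, size (Bw e) <= L.

(* Property (3) turns B-lengths into
   F-positions. *)
Lemma collecting_cut s a :
  rs_prop3 src tgt Fw Bw -> sym s -> a + L <= size (F s) ->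
  exists s1 c, [/\ sym s1, a <= c <= a + L & F s1 = drop c (F s)].
Proof.
case: s => [|e0 t] // F_eq_B sym_s a_le; set s := e0 :: t in sym_s a_le *.
pose f k := size (Bext (take k s)).
pose P k := collecting src tgt (src (nth e0 s k)).
have sorted_s : sorted linked s by case/and3P: sym_s => /andP[].
have F_size : size (F s) <= f (size t) + L.
  have take_t : take (size t) s = belast e0 t.
    by rewrite /s lastI -cats1 take_size_cat // size_belast.
  rewrite F_eq_B // /f take_t /= size_cat /Bext; have := Bw_le (last e0 t); lia.
have [k [k_le Pk a_le_fk fk_le]] : exists k, [/\ k <= size t, P k, a <= f k & f k <= a + L].
  apply: (@first_crossing f P L (size t)) => [|k k_lt|||]; rewrite /f ?take0 //.
  - rewrite (take_nth e0 (n := k)) ?Bext_rcons ?size_cat /=; last lia.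
    by case: ifP => _ /=; have := Bw_le (nth e0 s k); lia.
  - by case/and3P: sym_s.
  - move=> k k_lt; rewrite /P => /negbTE not_P.
    rewrite (take_nth e0 (n := k)) ?Bext_rcons; last by rewrite /s /=; lia.
    by rewrite (linked_nth e0 sorted_s) ?not_P ?cats0 // /s /=; lia.
  - by move: F_size; rewrite /f; lia.
have k_lt : k < size s by rewrite /s /=; lia.
have sym_drop := symmetric_drop sym_s k_lt Pk.
exists (drop k s), (f k); split => //; first by apply/andP.
rewrite !F_eq_B // -{2}(cat_take_drop k s) Bp_cat ?drop_size_cat //.
by rewrite (drop_nth e0 k_lt).
Qed.

Lemma distributing_cut s n :
  sym s -> n <= size (F s) ->
  exists p, [/\ sym p, n <= size (F p) <= n + L & F p = take (size (F p)) (F s)].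
Proof.
case: s => [|d ds] // sym_s n_le; set s := d :: ds in sym_s n_le *.
pose g j := size (F (take j.+1 s)).
pose P j := distributing src tgt (tgt (nth d s j)).
have sorted_s : sorted linked s by case/and3P: sym_s => /andP[].
have [j [j_le Pj n_le_gj gj_le]] : exists j, [/\ j <= size ds, P j, n <= g j & g j <= n + L].
  apply: (@last_crossing g P L (size ds)) => [|j j_lt|||].
  - by rewrite /g /= take0 /= cats0.
  - rewrite /g (take_nth d (n := j.+1)) ?Fp_rcons ?size_cat //.
    by case: ifP => _; have := Fw_le (nth d s j.+1); rewrite /= ?addn0; lia.
  - case/and3P: sym_s => _ _; rewrite /P -[size ds]/((size s).-1) nth_last //.
  - move=> j j_lt; rewrite /P => /negbTE not_P.
    rewrite /g (take_nth d (n := j.+1)) ?Fp_rcons //.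
    by rewrite -(linked_nth d sorted_s) ?not_P ?cats0 // /s /=; lia.
  - by rewrite /g take_oversize.
have j_lt : j < size s by rewrite /s /=; lia.
exists (take j.+1 s); split; first exact: symmetric_take sym_s j_lt Pj.
  by apply/andP.
have split_F : F s = F (take j.+1 s) ++ Fext (drop j.+1 s).
  by rewrite -Fp_cat ?cat_take_drop // /s.
by rewrite [F s]split_F take_size_cat.
Qed.

Lemma symmetric_window s a b :
  rs_prop3 src tgt Fw Bw -> sym s -> a + L <= b -> b <= size (F s) ->
  exists p c, [/\ sym p, a <= c <= a + L, b <= c + size (F p) <= b + L
                & F p = take (size (F p)) (drop c (F s))].
Proof.
move=> F_eq_B sym_s ab_le b_le.
have [s1 [c [sym_s1 /andP[a_le_c c_le] F_s1]]] :=
  collecting_cut F_eq_B sym_s (leq_trans ab_le b_le).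
have [|p [sym_p /andP[bc_le_p p_le] F_p]] := distributing_cut (n := b - c) sym_s1.
  by rewrite F_s1 size_drop; lia.
exists p, c; split => //; try by apply/andP; split; lia.
by rewrite {1}F_p F_s1.
Qed.
End SymmetricPaths.

Section Windows.
Variables (A : eqType) (W : nat -> A).

Lemma window_iota i n : window W i n = map W (iota i n).
Proof. by rewrite /window /mkseq -[in RHS](addn0 i) iotaDl -map_comp. Qed.

Lemma size_window i n : size (window W i n) = n.
Proof. exact: size_mkseq. Qed.

Lemma window_infix i n j m :
  j <= i -> i + n <= j + m -> infix (window W i n) (window W j m).
Proof.
move=> j_le i_le; rewrite !window_iota.
have -> : m = (i - j) + (n + (j + m - i - n)) by lia.
rewrite !iotaD subnKC // !map_cat; apply/infixP.
by exists (map W (iota j (i - j))), (map W (iota (i + n) (j + m - i - n))).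
Qed.

Lemma window_piece i n d m :
  d + m <= n -> take m (drop d (window W i n)) = window W (i + d) m.
Proof.
move=> dm_le; rewrite !window_iota -map_drop -map_take drop_iota take_iota.
by congr (map W (iota _ _)); lia.
Qed.
End Windows.

Lemma piece_of_middle (T : Type) (x v y : seq T) c m :
  size x <= c -> c + m <= size x + size v ->
  take m (drop c (x ++ v ++ y)) = take m (drop (c - size x) v).
Proof.
move=> x_le cm_le; rewrite drop_cat ltnNge x_le /= drop_cat.
case: ltnP => [lt_v | v_le]; first by rewrite takel_cat // size_drop; lia.
have -> : m = 0 by lia.
by rewrite !take0.
Qed.

Lemma edge_words_bound (A : eqType) (E : finType) (Fw Bw : E -> seq A) :
  exists L, forall e, size (Fw e) <= L /\ size (Bw e) <= L.
Proof.
exists (\max_(e : E) (size (Fw e) + size (Bw e))) => e.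
by have := @leq_bigmax _ (fun e => size (Fw e) + size (Bw e)) e; lia.
Qed.

Theorem lemma3p4 (A : eqType) (W : nat -> A)
  (V E : finType) (src tgt : E -> V) (Fw Bw : E -> seq A) :
  recurrent W ->
  graph_with_words src tgt ->
  rs_prop1 E ->
  rs_prop2 src tgt Fw Bw ->
  rs_prop3 src tgt Fw Bw ->
  rs_prop4 src tgt Fw ->
  rs_prop5 Fw Bw W ->
  rs_prop6 src tgt Fw W ->
  forall u : seq A, ifactor W u ->
    exists s : seq E, admissible src tgt Fw W s /\ infix u (Fp src tgt Fw s).
Proof.
move=> W_rec _ _ _ F_eq_B _ _ covered u u_fac.
have [L L_bound] := edge_words_bound Fw Bw.
have [i [L_le_i u_at_i]] := W_rec u u_fac L.
set v := window W (i - L) (L + size u + L).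
have [s [sym_s /infixP[x [y F_s]]]] :
    exists s, Defs.symmetric src tgt s /\ infix v (Fp src tgt Fw s).
  by apply: covered; exists (i - L); rewrite size_window.
have [|p [c [sym_p /andP[x_le_c c_le] /andP[u_le_p p_le] F_p]]] :=
  symmetric_window (fun e => proj1 (L_bound e)) (fun e => proj2 (L_bound e))
    (a := size x) (b := size x + L + size u) F_eq_B sym_s (leq_addr _ _).
  by rewrite F_s !size_cat size_window; lia.
have F_p_window : Fp src tgt Fw p = window W (i - L + (c - size x)) (size (Fp src tgt Fw p)).
  rewrite {1}F_p F_s piece_of_middle ?size_window; try lia.
  by rewrite window_piece //; lia.
exists p; split; first split => //.
  by exists (i - L + (c - size x)); rewrite [RHS]F_p_window.
by rewrite F_p_window -u_at_i; apply: window_infix; lia.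
Qed.
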